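(* Let $X=\{x_1,\overline{x_1},x_2,\overline{x_2},\dots\}$ and let $F(X)$ be the free involutive monoid on $X$. There is an isomorphism of categories \[E\colon \coprod_{m\ge0}\bigl(\mathcal{IF}(m)\times_{H_m}X^m\bigr)\to T(F(X))\] induced from the evaluation functors $\mathcal{IF}(m)\times X^m\to T(F(X))$ given on objects by $(f,y_1,\dots,y_m)\mapsto \mathsf H_{F(X)}(f)(y_1,\dots,y_m)$.
   Context: An involutive monoid is a monoid with an involutive anti-automorphism $m\mapsto\overline m$; $F(X)$ is the free such monoid in which the involution of $x_i$ is $\overline{x_i}$ (its elements are words in $X$). Let $C_2=\{1,t\}$. The category $\Delta H_+$: objects $[n]=\{0,\dots,n\}$ for $n\ge -1$ ($[-1]=\emptyset$); a morphism $f:[n]\to[m]$ is a map of sets with a total order on each fibre and a $C_2$-label on each element of $[n]$; the composite $g\circ f$ has fibre over $i$ equal to the concatenation, in the order of $g^{-1}(i)$, of the fibres $f^{-1}(j)$, each replaced by $f^{-1}(j)^t$ (order reversed, labels multiplied by $t$) when $j$ has label $t$ in $g$. The automorphism group of $[m-1]$ is the hyperoctahedral group $H_m=C_2^m\rtimes\Sigma_m$. For an involutive monoid $M$, $f:[p-1]\to[q-1]$ and $\mathbf m\in M^p$, $\mathsf H_M(f)(\mathbf m)=(b_0,\dots,b_{q-1})$ with $b_i$ the product in the order of $f^{-1}(i)$ of $m_x$ (label $1$) or $\overline{m_x}$ (label $t$), empty product $1$. The tuple category $T(M)$ has objects all finite (possibly empty) tuples in $M$ and, for each $f\in\mathrm{Hom}_{\Delta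 H_+}([p-1],[q-1])$ and $\mathbf m\in M^p$, a morphism $(f,\mathbf m):\mathbf m\to\mathsf H_M(f)(\mathbf m)$, with composition induced from $\Delta H_+$. $\mathcal{IF}(m)$ is the under-category $[m-1]\downarrow\Delta H_+$ (objects: morphisms $f$ out of $[m-1]$; morphisms $f\to g\circ f$ given by $g$), with right $H_m$-action $f\bullet h=f\circ h$. $X^m$ is regarded as a discrete category with left $H_m$-action $h\cdot\mathbf y=\mathsf H_{F(X)}(h)(\mathbf y)$ (applying the involution to the labelled coordinates and permuting). $\mathcal{IF}(m)\times_{H_m}X^m$ is the quotient of the product category by $(f\circ h,\mathbf y)\sim(f,h\cdot\mathbf y)$. The evaluation functor sends a morphism $g:f\to g\circ f$ at $\mathbf y$ to the morphism $(g,\mathsf H_{F(X)}(f)(\mathbf y))$ of $T(F(X))$. *)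

From mathcomp Require Import all_boot.
From Stdlib Require Import Relations.
Set Implicit Arguments. Unset Strict Implicit. Unset Printing Implicit Defensive.

(* A letter of X = {x_1, bar x_1, x_2, bar x_2, ...}:
   (i, false) is x_i, (i, true) is bar x_i. *)
Definition Letter := (nat * bool)%type.
(* Elements of F(X) are words in X; the product is concatenation, unit [::]. *)
Definition Word := seq Letter.
Definition bar_letter (a : Letter) : Letter := (a.1, ~~ a.2).
Definition winv (w : Word) : Word := rev (map bar_letter w).

(* A morphism f : [p-1] -> [q-1] is encoded by the q-list of its fibres:
   the i-th entry lists the elements of f^{-1}(i) in their total order,
   each paired with its C_2-label (false = 1, true = t). *)
Definition Hom := seq (seq (nat * bool)).
Definition valid_hom (f : Hom) (p : nat) : bool :=
  perm_eq (map fst (flatten f)) (iota 0 p).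
Definition hcod (f : Hom) : nat := size f.

Definition idH (n : nat) : Hom := map (fun i => [:: (i, false)]) (iota 0 n).

Definition fibre_t (s : seq (nat * bool)) : seq (nat * bool) :=
  rev (map (fun a => (a.1, ~~ a.2)) s).

Definition comp (g f : Hom) : Hom :=
  map (fun gi => flatten (map (fun jb =>
         if jb.2 then fibre_t (nth [::] f jb.1) else nth [::] f jb.1) gi)) g.

Definition is_auto (h : Hom) (m : nat) : bool :=
  valid_hom h m && (size h == m) && all (fun s => size s == 1) h.

Definition Hmap (f : Hom) (m : seq Word) : seq Word :=
  map (fun fib => flatten (map (fun xl =>
         if xl.2 then winv (nth [::] m xl.1) else nth [::] m xl.1) fib)) f.

Definition embed (y : seq Letter) : seq Word := map (fun a => [:: a]) y.

Definition act (h : Hom) (y : seq Letter) : seq Letter :=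
  map (fun w => head (0, false) w) (Hmap h (embed y)).

Definition TObj := seq Word.
(* morphism (f, m) : m -> Hmap f m, with f : [size m - 1] -> [q-1] *)
Definition TMor := (Hom * seq Word)%type.
Definition valid_tmor (t : TMor) : bool := valid_hom t.1 (size t.2).
Definition tdom (t : TMor) : TObj := t.2.
Definition tcod (t : TMor) : TObj := Hmap t.1 t.2.
Definition tid (w : TObj) : TMor := (idH (size w), w).
Definition tcomp (t2 t1 : TMor) : TMor := (comp t2.1 t1.1, t1.2).

(* object (f, y): f : [m-1] -> [q-1] an object of IF(m), y in X^m, m = size y *)
Definition SObj := (Hom * seq Letter)%type.
Definition valid_sobj (o : SObj) : bool := valid_hom o.1 (size o.2).
(* morphism (g, f, y) : (f, y) -> (g \o f, y), g : f -> g \o f in IF(m) *)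
Definition SMor := (Hom * Hom * seq Letter)%type.
Definition valid_smor (s : SMor) : bool :=
  valid_hom s.1.2 (size s.2) && valid_hom s.1.1 (hcod s.1.2).
Definition sdom (s : SMor) : SObj := (s.1.2, s.2).
Definition scod (s : SMor) : SObj := (comp s.1.1 s.1.2, s.2).
Definition sid (o : SObj) : SMor := (idH (hcod o.1), o.1, o.2).
Definition scomp (s2 s1 : SMor) : SMor := (comp s2.1.1 s1.1.1, s1.1.2, s1.2).

Definition obj_step (a b : SObj) : Prop :=
  exists f h y, valid_hom f (size y) /\ is_auto h (size y) /\
    a = (comp f h, y) /\ b = (f, act h y).
Definition obj_equiv : relation SObj := clos_refl_sym_trans SObj obj_step.

Definition mor_step (a b : SMor) : Prop :=
  exists g f h y, valid_hom f (size y) /\ valid_hom g (hcod f) /\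
    is_auto h (size y) /\ a = (g, comp f h, y) /\ b = (g, f, act h y).
Definition mor_equiv : relation SMor := clos_refl_sym_trans SMor mor_step.

Definition Eobj (o : SObj) : TObj := Hmap o.1 (embed o.2).
Definition Emor (s : SMor) : TMor := (s.1.1, Hmap s.1.2 (embed s.2)).

(* A morphism of Delta H_+ is a tuple of words in labelled points, and its
   composition is evaluation H along it; so functoriality of E is
   associativity of evaluation.  Evaluating a tuple of letters y along f
   only records the fibre sizes of f and the word obtained by reading y
   along the concatenated fibres of f.  The automorphism listing these
   concatenated fibres relates (f, y) to the normal form
   (block map with those fibre sizes, that word), which depends only on
   E(f, y) and is a section of E.  Hence E is bijective on objects, and on
   morphisms, since a morphism of T(F(X)) is a morphism of Delta H_+
   together with its source. *)
From Pilot Require Import Defs.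
From mathcomp Require Import all_boot.
From Stdlib Require Import Relations.
Set Implicit Arguments. Unset Strict Implicit.

Lemma winv_cat a b : winv (a ++ b) = winv b ++ winv a.
Proof. by rewrite /winv map_cat rev_cat. Qed.

Lemma winvK : involutive winv.
Proof.
move=> w; rewrite /winv map_rev revK -map_comp map_id_in // => -[i b] _.
by rewrite /bar_letter /= negbK.
Qed.

Definition eval_fibre (m : seq Word) (fib : Word) : Word :=
  flatten (map (fun xl => if xl.2 then winv (nth [::] m xl.1)
                          else nth [::] m xl.1) fib).

(* A fibre is a word in the letters (i, label), and [fibre_t] is [winv]. *)
Lemma comp_Hmap g f : Defs.comp g f = Hmap g f.
Proof. by []. Qed.

Lemma nth_Hmap f m j : nth [::] (Hmap f m) j = eval_fibre m (nth [::] f j).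
Proof. by elim: f j => [|fib f IH] [|j] //=. Qed.

Lemma eval_fibre_cat m a b :
  eval_fibre m (a ++ b) = eval_fibre m a ++ eval_fibre m b.
Proof. by rewrite /eval_fibre map_cat flatten_cat. Qed.

Lemma eval_fibre_winv m a : eval_fibre m (winv a) = winv (eval_fibre m a).
Proof.
elim: a => [|[j b] a IH] //.
rewrite -cat1s winv_cat !eval_fibre_cat IH winv_cat; congr (_ ++ _).
by case: b; rewrite /eval_fibre /= !cats0 ?winvK.
Qed.

Lemma eval_fibre_Hmap f m a :
  eval_fibre m (eval_fibre f a) = eval_fibre (Hmap f m) a.
Proof.
elim: a => [|[j b] a IH] //.
rewrite -cat1s !eval_fibre_cat IH; congr (_ ++ _).
rewrite [in RHS]/eval_fibre /= nth_Hmap !cats0.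
by case: b => //; apply: eval_fibre_winv.
Qed.

Lemma Hmap_comp g f m : Hmap (Defs.comp g f) m = Hmap g (Hmap f m).
Proof.
by rewrite /Hmap -map_comp; apply: eq_map => a /=; apply: eval_fibre_Hmap.
Qed.

Lemma valid_hom_lt f n p : valid_hom f n -> p \in flatten f -> p.1 < n.
Proof.
move=> Vf fp; have : p.1 \in iota 0 n by rewrite -(perm_mem Vf) map_f.
by rewrite mem_iota.
Qed.

Lemma size_flatten_valid f n : valid_hom f n -> size (flatten f) = n.
Proof. by move=> Vf; rewrite -(size_map fst) (perm_size Vf) size_iota. Qed.

Definition eval_letter (y : seq Letter) (p : nat * bool) : Letter :=
  if p.2 then bar_letter (nth (0, false) y p.1) else nth (0, false) y p.1.

Lemma Hmap_embed f y :
  valid_hom f (size y) -> Hmap f (embed y) = map (map (eval_letter y)) f.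
Proof.
move=> Vf; apply/eq_in_map => fib f_fib.
rewrite -(flatten_map1 (eval_letter y)); congr flatten; apply/eq_in_map => p fib_p.
have p_lt : p.1 < size y by apply: valid_hom_lt Vf _; apply/flattenP; exists fib.
by rewrite /embed (nth_map (0, false)) // /eval_letter; case: p.2.
Qed.

Lemma shape_map_map (T U : Type) (g : T -> U) (f : seq (seq T)) :
  shape (map (map g) f) = shape f.
Proof. by rewrite /shape -map_comp; apply: eq_map => s /=; rewrite size_map. Qed.

Lemma act_embed h y : is_auto h (size y) -> embed (act h y) = Hmap h (embed y).
Proof.
case/andP => /andP[Vh _] /allP h_sing.
rewrite /act (Hmap_embed Vh) /embed -!map_comp; apply/eq_in_map => fib h_fib /=.
by move: (h_sing _ h_fib); case: fib {h_fib} => [|p [|]].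
Qed.

Lemma valid_embed_flatten f n : valid_hom f n -> valid_hom (embed (flatten f)) n.
Proof. by rewrite /valid_hom /embed flatten_seq1. Qed.

Lemma is_auto_embed_flatten f n : valid_hom f n -> is_auto (embed (flatten f)) n.
Proof.
move=> Vf; rewrite /is_auto valid_embed_flatten // size_map (size_flatten_valid Vf).
by rewrite eqxx; apply/allP => _ /mapP[p _ ->].
Qed.

Lemma act_embed_flatten f y :
  valid_hom f (size y) -> act (embed (flatten f)) y = map (eval_letter y) (flatten f).
Proof.
move=> Vf; rewrite /act (Hmap_embed (valid_embed_flatten Vf)) /embed.
by rewrite -!map_comp.
Qed.

Fixpoint block_hom (off : nat) (ns : seq nat) : Hom :=
  if ns is n :: ns' then
    map (fun k => (k, false)) (iota off n) :: block_hom (off + n) ns'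
  else [::].

Lemma size_block_hom off ns : size (block_hom off ns) = size ns.
Proof. by elim: ns off => [|n ns IH] off //=; rewrite IH. Qed.

Lemma map_fst_flatten_block_hom off ns :
  map fst (flatten (block_hom off ns)) = iota off (sumn ns).
Proof.
elim: ns off => [|n ns IH] off //=.
by rewrite map_cat IH iotaD -map_comp map_id.
Qed.

Lemma valid_block_hom ns : valid_hom (block_hom 0 ns) (sumn ns).
Proof. by rewrite /valid_hom map_fst_flatten_block_hom. Qed.

Lemma map_eval_letter_block_hom pre w :
  map (map (eval_letter (pre ++ flatten w))) (block_hom (size pre) (shape w)) = w.
Proof.
elim: w pre => [|a w IH] pre //=.
congr (_ :: _); last by rewrite -size_cat catA IH.
rewrite -map_comp (@eq_map _ _ _ (nth (0, false) (pre ++ a ++ flatten w))) //.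
rewrite map_nth_iota; last by rewrite !size_cat addKn leq_addr.
by rewrite drop_size_cat // take_size_cat.
Qed.

Lemma comp_block_hom_embed f :
  Defs.comp (block_hom 0 (shape f)) (embed (flatten f)) = f.
Proof.
have Vb : valid_hom (block_hom 0 (shape f)) (size (flatten f)).
  by rewrite size_flatten; apply: valid_block_hom.
by rewrite comp_Hmap (Hmap_embed Vb) -[flatten f]cat0s map_eval_letter_block_hom.
Qed.

Definition normal_form (w : TObj) : SObj := (block_hom 0 (shape w), flatten w).

Lemma valid_normal_form w : valid_sobj (normal_form w).
Proof. by rewrite /valid_sobj /= size_flatten; apply: valid_block_hom. Qed.

Lemma Eobj_normal_form w : Eobj (normal_form w) = w.
Proof.
rewrite /Eobj (Hmap_embed (valid_normal_form w)) /=.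
by rewrite -[flatten w]cat0s map_eval_letter_block_hom.
Qed.

Lemma obj_step_normal_form o : valid_sobj o -> obj_step o (normal_form (Eobj o)).
Proof.
case: o => f y Vf; rewrite /valid_sobj /= in Vf.
exists (block_hom 0 (shape f)), (embed (flatten f)), y; split.
  by rewrite -(size_flatten_valid Vf) size_flatten; apply: valid_block_hom.
split; first exact: is_auto_embed_flatten.
split; first by rewrite comp_block_hom_embed.
rewrite /normal_form /Eobj /= (Hmap_embed Vf) shape_map_map -map_flatten.
by rewrite act_embed_flatten.
Qed.

Lemma obj_step_Eobj a b : obj_step a b -> Eobj a = Eobj b.
Proof.
by move=> [f [h [y [_ [Ah [-> ->]]]]]]; rewrite /Eobj /= Hmap_comp act_embed.
Qed.

Lemma mor_step_lift g o o' :
  valid_hom g (hcod o.1) -> obj_step o o' -> mor_step (g, o.1, o.2) (g, o'.1, o'.2).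
Proof.
case: o => f0 y0 /= Vg [f [h [y [Vf [Ah [[Ef ->] ->]]]]]].
subst f0; rewrite /hcod /Defs.comp size_map in Vg.
by exists g, f, h, y.
Qed.

Lemma mor_step_Emor a b : mor_step a b -> Emor a = Emor b.
Proof.
by move=> [g [f [h [y [_ [_ [Ah [-> ->]]]]]]]]; rewrite /Emor /= Hmap_comp act_embed.
Qed.

Lemma clos_rst_congr (A B : Type) (R : relation A) (F : A -> B) :
  (forall a b, R a b -> F a = F b) ->
  forall a b, clos_refl_sym_trans A R a b -> F a = F b.
Proof. by move=> FR a b; elim => [x y /FR|x|x y _ ->|x y z _ -> _ ->]. Qed.

Lemma Eobj_eq_equiv o1 o2 : valid_sobj o1 -> valid_sobj o2 ->
  (Eobj o1 = Eobj o2 <-> obj_equiv o1 o2).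
Proof.
move=> V1 V2; split; last exact: (clos_rst_congr obj_step_Eobj).
move=> E12; apply: (rst_trans _ _ _ (normal_form (Eobj o1))).
  exact/rst_step/obj_step_normal_form.
by rewrite E12; apply/rst_sym/rst_step/obj_step_normal_form.
Qed.

Lemma Emor_eq_equiv s1 s2 : valid_smor s1 -> valid_smor s2 ->
  (Emor s1 = Emor s2 <-> mor_equiv s1 s2).
Proof.
case: s1 s2 => [[g1 f1] y1] [[g2 f2] y2] /andP[/= V1 Vg1] /andP[/= V2 Vg2].
split; last exact: (clos_rst_congr mor_step_Emor).
case=> Eg E12; subst g2; set w := Eobj (f1, y1).
apply: (rst_trans _ _ _ (g1, (normal_form w).1, (normal_form w).2)).
  exact/rst_step/(mor_step_lift (o := (f1, y1)) Vg1)/obj_step_normal_form.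
have -> : w = Eobj (f2, y2) by exact: E12.
exact/rst_sym/rst_step/(mor_step_lift (o := (f2, y2)) Vg2)/obj_step_normal_form.
Qed.

Theorem lemma3p7 :
  (* E is a functor (from each IF(m) x X^m) *)
  (forall s : SMor, valid_smor s ->
     valid_tmor (Emor s) /\ tdom (Emor s) = Eobj (sdom s) /\
     tcod (Emor s) = Eobj (scod s)) /\
  (forall o : SObj, valid_sobj o -> Emor (sid o) = tid (Eobj o)) /\
  (forall s1 s2 : SMor, valid_smor s1 -> valid_smor s2 -> scod s1 = sdom s2 ->
     Emor (scomp s2 s1) = tcomp (Emor s2) (Emor s1)) /\
  (* the induced functor on the quotient is well defined and bijective on objects *)
  (forall o1 o2 : SObj, valid_sobj o1 -> valid_sobj o2 ->
     (Eobj o1 = Eobj o2 <-> obj_equiv o1 o2)) /\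
  (forall w : TObj, exists o : SObj, valid_sobj o /\ Eobj o = w) /\
  (* ... and bijective on morphisms *)
  (forall s1 s2 : SMor, valid_smor s1 -> valid_smor s2 ->
     (Emor s1 = Emor s2 <-> mor_equiv s1 s2)) /\
  (forall t : TMor, valid_tmor t -> exists s : SMor, valid_smor s /\ Emor s = t).
Proof.
split.
  case=> [[g f] y] /andP[_ Vg]; rewrite /valid_tmor /tcod /Emor /Eobj /= size_map.
  by rewrite Hmap_comp.
split; first by case=> f y _; rewrite /Emor /tid /Eobj /= size_map.
split; first by [].
split; first exact: Eobj_eq_equiv.
split.
  by move=> w; exists (normal_form w); rewrite valid_normal_form Eobj_normal_form.
split; first exact: Emor_eq_equiv.
case=> g w Vg; exists (g, (normal_form w).1, (normal_form w).2); split.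
  apply/andP; split; first exact: valid_normal_form.
  by rewrite /hcod size_block_hom size_map.
by rewrite /Emor /= -[Hmap _ _]/(Eobj (normal_form w)) Eobj_normal_form.
Qed.
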